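(* Let $(G_a,G_b)\sim ER(n;\mathbf p)$ be correlated graphs on vertex set $V$, let $h\le n-2$, and let $U=\{u_1,u_2\}\subseteq V$. Let $\mathbf w_a^U=f_h(G_a[V\setminus U])$, $\mathbf w_b^U=f_h(G_b[V\setminus U])$, $B_a^U=G_a[U,\mathbf w_a^U]$, $B_b^U=G_b[U,\mathbf w_b^U]$, and let $\mathcal E^H(U)$ be the event $\mathbf w_a^U=\mathbf w_b^U$. Then \[ B_a^U\sim ER(2,h,p_{1*}),\qquad B_b^U\sim ER(2,h,p_{*1}), \] and, conditionally on $\mathcal E^H(U)$, $(B_a^U,B_b^U)\sim ER(2,h,\mathbf p)$.
   Context: Correlated Erdős–Rényi model $ER(n;\mathbf{p})$: $G_a,G_b$ are random graphs on the same $n$-vertex set $V$; for each unordered pair $e$ of distinct vertices, independently, $(\mathbf 1[e\in E(G_a)],\mathbf 1[e\in E(G_b)])$ equals $(1,1),(1,0),(0,1),(0,0)$ with probabilities $p_{11},p_{10},p_{01},p_{00}$; $p_{1*}=p_{11}+p_{10}$, $p_{*1}=p_{11}+p_{01}$. $G[W]$ is the induced subgraph on $W$. $f_h(G)$ is the vector $(w_1,\dots,w_h)$ of $h$ distinct vertices of $G$ such that $\deg_G(w_i)$ equals the $i$-th largest degree of $G$ (ties broken by a fixed rule, so $f_h(G)$ is a function of $G$). For $U\subseteq V$ and a vector $\mathbf w=(w_1,\dots,w_h)$ of distinct vertices of $V\setminus U$, $G[U,\mathbf w]$ is the bipartite graph with left vertex set $U$, right vertex set $[h]$, and edge set $\{(u,j)\in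 U\times[h]:\{u,w_j\}\in E(G)\}$. $ER(2,h,q)$ denotes the random bipartite graph with left set $U$, right set $[h]$, each of the $2h$ possible edges present independently with probability $q$; $ER(2,h,\mathbf p)$ denotes the correlated pair of such bipartite graphs in which for each left–right pair independently the edge indicator pair takes values $(1,1),(1,0),(0,1),(0,0)$ with probabilities $p_{11},p_{10},p_{01},p_{00}$. *)

From HB Require Import structures.
From mathcomp Require Import all_boot all_order all_algebra.
Set Implicit Arguments. Unset Strict Implicit. Unset Printing Implicit Defensive.
Import Order.TTheory GRing.Theory Num.Theory.
Local Open Scope ring_scope.

(* Unordered pairs of distinct vertices of V = 'I_n, encoded as (i,j) with i<j. *)
Definition upair (n : nat) := {e : 'I_n * 'I_n | (e.1 < e.2)%N}.

(* An outcome of the correlated pair (G_a,G_b): for each unordered pair the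
   pair of edge indicators (1[e in G_a], 1[e in G_b]). *)
Definition outcome (n : nat) := {ffun upair n -> bool * bool}.

Section Prob.
Variable R : realFieldType.
Variables p11 p10 p01 p00 : R.

Definition pcell (x : bool * bool) : R :=
  match x with
  | (true, true) => p11 | (true, false) => p10
  | (false, true) => p01 | (false, false) => p00
  end.

Definition weight (n : nat) (om : outcome n) : R := \prod_(e : upair n) pcell (om e).

Definition Pr (n : nat) (E : pred (outcome n)) : R :=
  \sum_(om : outcome n | E om) weight om.

Definition ER2h_corr (h : nat) (b1 b2 : {ffun 'I_2 * 'I_h -> bool}) : R :=
  \prod_(x : 'I_2 * 'I_h) pcell (b1 x, b2 x).
End Prob.

Definition bern (R : realFieldType) (q : R) (b : bool) : R := if b then q else 1 - q.
Definition ER2h (R : realFieldType) (h : nat) (q : R) (b : {ffun 'I_2 * 'I_h -> bool}) : R :=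
  \prod_(x : 'I_2 * 'I_h) bern q (b x).

Definition adj_a (n : nat) (om : outcome n) (u v : 'I_n) : bool :=
  [exists e : upair n, ((val e == (u, v)) || (val e == (v, u))) && (om e).1].
Definition adj_b (n : nat) (om : outcome n) (u v : 'I_n) : bool :=
  [exists e : upair n, ((val e == (u, v)) || (val e == (v, u))) && (om e).2].

(* induced subgraph G[W], as an adjacency table on 'I_n with no edges outside W *)
Definition induced (n : nat) (A : 'I_n -> 'I_n -> bool) (W : {set 'I_n})
  : {ffun 'I_n * 'I_n -> bool} :=
  [ffun x => [&& x.1 \in W, x.2 \in W & A x.1 x.2]].

Definition deg (n : nat) (W : {set 'I_n}) (A : {ffun 'I_n * 'I_n -> bool}) (v : 'I_n) : nat :=
  #|[set w in W | A (v, w)]|.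

(* i-th largest degree (0-indexed) among the vertices of W *)
Definition kth_deg (n : nat) (W : {set 'I_n}) (A : {ffun 'I_n * 'I_n -> bool}) (i : nat) : nat :=
  nth 0%N (sort geq [seq deg W A v | v <- enum W]) i.

(* Being a
   function of (W, A), ties are broken by a fixed rule. *)
Definition top_rule (n h : nat)
  (f : {set 'I_n} -> {ffun 'I_n * 'I_n -> bool} -> h.-tuple 'I_n) : Prop :=
  forall (W : {set 'I_n}) (A : {ffun 'I_n * 'I_n -> bool}), (h <= #|W|)%N ->
    uniq (f W A) /\
    forall i : 'I_h, tnth (f W A) i \in W /\ deg W A (tnth (f W A) i) = kth_deg W A i.

Definition lab (n : nat) (u1 u2 : 'I_n) (k : 'I_2) : 'I_n := if k == ord0 then u1 else u2.

Definition bip (n h : nat) (A : 'I_n -> 'I_n -> bool) (u1 u2 : 'I_n) (w : h.-tuple 'I_n)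
  : {ffun 'I_2 * 'I_h -> bool} :=
  [ffun x => A (lab u1 u2 x.1) (tnth w x.2)].

(* B_a^U reads only the 2h edges between U and w_a^U, whereas w_a^U and w_b^U
   are functions of the edges inside V \ U.  Conditioning on w_a^U = w therefore
   leaves the states of the edges between U and w independent of the conditioning
   and distributed as under ER(n; p).  Summing over w gives the marginal laws;
   the event w_a^U = w_b^U is also determined by the edges inside V \ U, so the
   same argument restricted to it gives the joint law. *)

From Pilot Require Import Defs.
From HB Require Import structures.
From mathcomp Require Import all_boot all_order all_algebra.
From mathcomp Require Import ring.
Set Implicit Arguments. Unset Strict Implicit. Unset Printing Implicit Defensive.
Import Order.TTheory GRing.Theory Num.Theory.
Local Open Scope ring_scope.

Section EdgeIndependence.
Variables (R : realFieldType) (p11 p10 p01 p00 : R) (n : nat).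
Hypothesis psum : p11 + p10 + p01 + p00 = 1.
Local Notation pc := (pcell p11 p10 p01 p00).
Local Notation PR := (@Pr R p11 p10 p01 p00 n).

Lemma sum_bool_pair (F : bool * bool -> R) :
  \sum_v F v = F (true, true) + F (true, false) + F (false, true) + F (false, false).
Proof.
rewrite (eq_bigr (fun v => F (v.1, v.2))) => [|[] //].
by rewrite -(pair_bigA _ (fun a b => F (a, b))) /= !big_bool /= addrA.
Qed.

Lemma sum_pcell : \sum_v pc v = 1.
Proof. by rewrite sum_bool_pair. Qed.

Lemma sum_pcell_fst (b : bool) : \sum_(v | v.1 == b) pc v = bern (p11 + p10) b.
Proof. by rewrite big_mkcond sum_bool_pair /bern; case: b; rewrite /= -?psum; ring. Qed.

Lemma sum_pcell_snd (b : bool) : \sum_(v | v.2 == b) pc v = bern (p11 + p01) b.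
Proof. by rewrite big_mkcond sum_bool_pair /bern; case: b; rewrite /= -?psum; ring. Qed.

Lemma eq_Pr (E E' : pred (outcome n)) : E =1 E' -> PR E = PR E'.
Proof. exact: eq_bigl. Qed.

Lemma Pr_pred0 (E : pred (outcome n)) : E =1 xpred0 -> PR E = 0.
Proof. by move=> E0; rewrite /Pr big_pred0. Qed.

Lemma Pr_predT : PR xpredT = 1.
Proof.
rewrite /Pr /weight -(bigA_distr_bigA (fun (_ : upair n) v => pc v)).
by rewrite big1 // => e _; rewrite sum_pcell.
Qed.

Lemma Pr_partition (T : finType) (k : outcome n -> T) (Q : pred (outcome n)) :
  PR Q = \sum_(t : T) PR (fun om => (k om == t) && Q om).
Proof.
rewrite /Pr (partition_big k xpredT) //.
by apply: eq_bigr => t _; apply: eq_bigl => om; rewrite andbC.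
Qed.

Definition upd_edge (om : outcome n) (e0 : upair n) (v : bool * bool) : outcome n :=
  [ffun e => if e == e0 then v else om e].

Lemma upd_edge_at om e0 v : upd_edge om e0 v e0 = v.
Proof. by rewrite ffunE eqxx. Qed.

Lemma upd_edge_other om e0 v e : e != e0 -> upd_edge om e0 v e = om e.
Proof. by rewrite ffunE => /negbTE ->. Qed.

Lemma upd_edge_upd om e0 v v' : upd_edge (upd_edge om e0 v) e0 v' = upd_edge om e0 v'.
Proof. by apply/ffunP => e; rewrite !ffunE; case: eqVneq. Qed.

Lemma upd_edge_eq om e0 v : (upd_edge om e0 v == om) = (om e0 == v).
Proof.
apply/eqP/eqP => [<- | om_v]; first by rewrite ffunE eqxx.
by apply/ffunP => e; rewrite ffunE; case: eqVneq => // ->.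
Qed.

Lemma Pr_indep_edge (E : pred (outcome n)) (e0 : upair n) (C : pred (bool * bool)) :
  (forall om v, E (upd_edge om e0 v) = E om) ->
  PR (fun om => E om && C (om e0)) = PR E * \sum_(v | C v) pc v.
Proof.
move=> E_upd.
pose G (om : outcome n) := \prod_(e | e != e0) pc (om e).
pose c0 := (true, true).
pose S := \sum_(om | E om && (om e0 == c0)) G om.
(* Resetting e0 to v maps the slice {om e0 = c0} bijectively onto {om e0 = v},
   changing neither E nor the factors of the weight away from e0. *)
have slice v : \sum_(om | E om && (om e0 == v)) weight p11 p10 p01 p00 om = pc v * S.
  rewrite mulr_sumr (reindex_onto (fun om => upd_edge om e0 v) (fun om => upd_edge om e0 c0));
    last by move=> om /andP[_ om_v]; rewrite upd_edge_upd; apply/eqP; rewrite upd_edge_eq.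
  apply: eq_big => [om | om _].
    by rewrite E_upd upd_edge_at eqxx andbT upd_edge_upd upd_edge_eq.
  rewrite /weight (bigD1 e0) //= upd_edge_at; congr (_ * _).
  by apply: eq_bigr => e /upd_edge_other ->.
have PrC (D : pred (bool * bool)) :
    PR (fun om => E om && D (om e0)) = (\sum_(v | D v) pc v) * S.
  rewrite /Pr (partition_big (fun om : outcome n => om e0) D) => [|om /andP[] //].
  rewrite mulr_suml; apply: eq_bigr => v Dv; rewrite -slice.
  by apply: eq_bigl => om; case: (eqVneq (om e0) v) => [->|]; rewrite ?Dv ?andbT ?andbF.
rewrite PrC mulrC; congr (_ * _).
rewrite -[S]mul1r -sum_pcell -PrC.
by apply: eq_Pr => om; rewrite andbT.
Qed.

Lemma Pr_indep_edges (X : finType) (g : X -> upair n) (E : pred (outcome n))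
    (C : X -> pred (bool * bool)) :
  injective g ->
  (forall om om' : outcome n, (forall e, e \notin codom g -> om e = om' e) -> E om = E om') ->
  PR (fun om => E om && [forall x, C x (om (g x))]) = PR E * \prod_x \sum_(v | C x v) pc v.
Proof.
move=> g_inj E_outside.
suff indep_seq (s : seq X) : uniq s ->
    PR (fun om => E om && all (fun x => C x (om (g x))) s) =
    PR E * \prod_(x <- s) \sum_(v | C x v) pc v.
  rewrite -(indep_seq _ (index_enum_uniq X)); apply: eq_Pr => om; congr andb.
  by apply/forallP/allP => [Cg x _ | Cg x]; [exact: Cg | exact/Cg/mem_index_enum].
elim: s => [_ | x s IHs /= /andP[x_s s_uniq]].
  by rewrite big_nil mulr1; apply: eq_Pr => om; rewrite andbT.
rewrite big_cons mulrCA -IHs // mulrC -(Pr_indep_edge (e0 := g x)).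
  by apply: eq_Pr => om /=; rewrite andbA andbAC.
move=> om v; congr andb.
  apply: E_outside => e e_g; rewrite upd_edge_other //.
  by apply: contraNneq e_g => ->; exact: codom_f.
apply: eq_in_all => y y_s /=; rewrite upd_edge_other //.
by apply: contraNneq x_s => /g_inj <-.
Qed.

End EdgeIndependence.

Section EdgeEncoding.
Variable n : nat.

Definition ordered_pair (a b : 'I_n) : 'I_n * 'I_n :=
  if (a < b)%N then (a, b) else (b, a).

Lemma ordered_pair_lt (a b : 'I_n) :
  a != b -> ((ordered_pair a b).1 < (ordered_pair a b).2)%N.
Proof.
rewrite /ordered_pair; case: (ltnP a b) => //= ba ab.
by rewrite ltn_neqAle ba andbT eq_sym.
Qed.

Lemma ordered_pairE (a b a' b' : 'I_n) : ordered_pair a b = ordered_pair a' b' ->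
  (a == a') && (b == b') || (a == b') && (b == a').
Proof. by rewrite /ordered_pair; do 2 case: ifP => _; case=> -> ->; rewrite !eqxx ?orbT. Qed.

Definition edge (a b : 'I_n) (ab : a != b) : upair n :=
  exist _ (ordered_pair a b) (ordered_pair_lt ab).

Lemma edge_ends (a b : 'I_n) (ab : a != b) :
  (val (edge ab) == (a, b)) || (val (edge ab) == (b, a)).
Proof. by rewrite /= /ordered_pair; case: ifP; rewrite eqxx ?orbT. Qed.

Lemma edge_of_ends (e : upair n) (a b : 'I_n) (ab : a != b) :
  (val e == (a, b)) || (val e == (b, a)) -> e = edge ab.
Proof.
case/orP=> /eqP e_ab; apply: val_inj; have := valP e; rewrite e_ab /= /ordered_pair => lt.
  by rewrite lt.
by rewrite ltnNge ltnW.
Qed.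

Definition adj (g : upair n -> bool) (a b : 'I_n) : bool :=
  [exists e : upair n, ((val e == (a, b)) || (val e == (b, a))) && g e].

Lemma adj_edge (g : upair n -> bool) (a b : 'I_n) (ab : a != b) : adj g a b = g (edge ab).
Proof.
apply/existsP/idP => [[e /andP[/(edge_of_ends ab) -> //]] | g_ab].
by exists (edge ab); rewrite edge_ends.
Qed.

Lemma adj_pair_edge (om : outcome n) (a b : 'I_n) (ab : a != b) :
  (adj_a om a b, adj_b om a b) = om (edge ab).
Proof.
rewrite -[adj_a om a b]/(adj (fun e => (om e).1) a b).
rewrite -[adj_b om a b]/(adj (fun e => (om e).2) a b).
by rewrite !adj_edge; case: (om _).
Qed.

Definition inside (W : {set 'I_n}) (e : upair n) : bool :=
  ((val e).1 \in W) && ((val e).2 \in W).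

Definition determined_inside (T : Type) (W : {set 'I_n}) (F : outcome n -> T) :=
  forall om om' : outcome n, (forall e, inside W e -> om e = om' e) -> F om = F om'.

Lemma induced_adj_inside (W : {set 'I_n}) (g g' : upair n -> bool) :
  (forall e, inside W e -> g e = g' e) -> induced (adj g) W = induced (adj g') W.
Proof.
move=> gg'; apply/ffunP => -[a b]; rewrite !ffunE /=.
case aW: (a \in W); case bW: (b \in W) => //=.
have ends_inside e : (val e == (a, b)) || (val e == (b, a)) -> inside W e.
  by case/orP => /eqP e_ab; rewrite /inside e_ab /= aW bW.
apply/existsP/existsP => -[e /andP[ends ge]]; exists e; rewrite ends /=.
  by rewrite -gg' // ends_inside.
by rewrite gg' // ends_inside.
Qed.

Lemma determined_induced_a (W : {set 'I_n}) :
  determined_inside W (fun om => induced (adj_a om) W).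
Proof.
move=> om om' agree.
by apply: (induced_adj_inside (g := fun e => (om e).1)) => e /agree ->.
Qed.

Lemma determined_induced_b (W : {set 'I_n}) :
  determined_inside W (fun om => induced (adj_b om) W).
Proof.
move=> om om' agree.
by apply: (induced_adj_inside (g := fun e => (om e).2)) => e /agree ->.
Qed.

Lemma bip_eqE (h : nat) (A : 'I_n -> 'I_n -> bool) (u1 u2 : 'I_n) (w : h.-tuple 'I_n)
    (b : {ffun 'I_2 * 'I_h -> bool}) :
  (bip A u1 u2 w == b) = [forall x, A (lab u1 u2 x.1) (tnth w x.2) == b x].
Proof.
apply/eqP/forallP => [<- x | Ab]; first by rewrite ffunE.
by apply/ffunP => x; rewrite ffunE; apply/eqP.
Qed.

End EdgeEncoding.

Section TopVertices.
Variables (R : realFieldType) (p11 p10 p01 p00 : R) (n h : nat) (u1 u2 : 'I_n).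
Hypothesis psum : p11 + p10 + p01 + p00 = 1.
Hypothesis u12 : u1 != u2.
Local Notation pc := (pcell p11 p10 p01 p00).
Local Notation PR := (@Pr R p11 p10 p01 p00 n).
Local Notation W := (~: [set u1; u2]).
Local Notation lab := (lab u1 u2).

Definition bip_state (om : outcome n) (w : h.-tuple 'I_n) (x : 'I_2 * 'I_h) : bool * bool :=
  (adj_a om (lab x.1) (tnth w x.2), adj_b om (lab x.1) (tnth w x.2)).

Lemma bip_pair_eqE (om : outcome n) (w : h.-tuple 'I_n) (b1 b2 : {ffun 'I_2 * 'I_h -> bool}) :
  (bip (adj_a om) u1 u2 w == b1) && (bip (adj_b om) u1 u2 w == b2) =
  [forall x, bip_state om w x == (b1 x, b2 x)].
Proof.
rewrite !bip_eqE; apply/andP/forallP => [[/forallP ea /forallP eb] x | eab].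
  by rewrite xpair_eqE ea eb.
by split; apply/forallP => x; have /andP[] := eab x.
Qed.

Lemma lab_notin (k : 'I_2) : lab k \notin W.
Proof. by rewrite !inE negbK /Defs.lab; case: ifP; rewrite eqxx ?orbT. Qed.

Lemma card_compl_pair : #|W| = (n - 2)%N.
Proof.
have := cardsC [set u1; u2]; rewrite cards2 u12 card_ord => card_n.
by rewrite -[in RHS]card_n addKn.
Qed.

Lemma lab_inj : injective lab.
Proof.
move=> [[|[|?]] ?] [[|[|?]] ?] //; rewrite /Defs.lab /= => u.
all: first [exact: val_inj | by move: u12; rewrite u eqxx].
Qed.

Section FixedTop.
Variable w : h.-tuple 'I_n.
Hypotheses (w_uniq : uniq w) (w_in : forall j, tnth w j \in W).

Lemma lab_neq_top (x : 'I_2 * 'I_h) : lab x.1 != tnth w x.2.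
Proof. by apply: contraNneq (lab_notin x.1) => ->. Qed.

Definition bip_edge (x : 'I_2 * 'I_h) : upair n := edge (lab_neq_top x).

Lemma bip_edge_not_inside x : ~~ inside W (bip_edge x).
Proof.
have := edge_ends (lab_neq_top x); rewrite /inside.
by case/orP => /eqP ->; rewrite /= (negbTE (lab_notin _)) ?andbF.
Qed.

Lemma bip_edge_inj : injective bip_edge.
Proof.
move=> [k j] [k' j'] /(congr1 val) /ordered_pairE /=.
case/orP => /andP[/eqP kk' /eqP jj']; last by move: (lab_notin k); rewrite kk' w_in.
by rewrite (lab_inj kk') (tuple_uniqP _ w_uniq _ _ jj').
Qed.

Lemma Pr_bip_indep (E : pred (outcome n)) (C : 'I_2 * 'I_h -> pred (bool * bool)) :
  determined_inside W E ->
  PR (fun om => E om && [forall x, C x (bip_state om w x)]) =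
  PR E * \prod_x \sum_(v | C x v) pc v.
Proof.
move=> detE; rewrite -(Pr_indep_edges psum _ bip_edge_inj); last first.
  move=> om om' agree; apply: detE => e e_in; apply: agree.
  by apply: contraL e_in => /codomP[x ->]; exact: bip_edge_not_inside.
apply: eq_Pr => om; congr andb; apply: eq_forallb => x.
by rewrite /bip_state (adj_pair_edge om (lab_neq_top x)).
Qed.

End FixedTop.

Lemma Pr_top_indep (k : outcome n -> h.-tuple 'I_n) (Q : pred (outcome n))
    (C : 'I_2 * 'I_h -> pred (bool * bool)) :
  (forall om, uniq (k om)) -> (forall om j, tnth (k om) j \in W) ->
  determined_inside W k -> determined_inside W Q ->
  PR (fun om => Q om && [forall x, C x (bip_state om (k om) x)]) =
  PR Q * \prod_x \sum_(v | C x v) pc v.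
Proof.
move=> k_uniq k_in detk detQ.
rewrite (Pr_partition _ _ _ _ k) [PR Q](Pr_partition _ _ _ _ k) mulr_suml; apply: eq_bigr => w _.
case: (pickP (fun om => k om == w)) => [om0 /eqP <- | no_om]; last first.
  by rewrite !Pr_pred0 ?mul0r // => om; rewrite no_om.
rewrite -(Pr_bip_indep (k_uniq om0) (k_in om0)); last first.
  by move=> om om' agree; rewrite (detk _ _ agree) (detQ _ _ agree).
by apply: eq_Pr => om; rewrite -andbA; case: eqVneq => // ->.
Qed.

End TopVertices.

Theorem lemma4p12 (R : realFieldType) (n h : nat) (p11 p10 p01 p00 : R)
  (f : {set 'I_n} -> {ffun 'I_n * 'I_n -> bool} -> h.-tuple 'I_n)
  (u1 u2 : 'I_n) :
  0 <= p11 -> 0 <= p10 -> 0 <= p01 -> 0 <= p00 ->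
  p11 + p10 + p01 + p00 = 1 ->
  (h <= n - 2)%N ->
  u1 != u2 ->
  top_rule f ->
  let W := ~: [set u1; u2] in
  let wa := fun om : outcome n => f W (induced (adj_a om) W) in
  let wb := fun om : outcome n => f W (induced (adj_b om) W) in
  let Ba := fun om : outcome n => bip (adj_a om) u1 u2 (wa om) in
  let Bb := fun om : outcome n => bip (adj_b om) u1 u2 (wb om) in
  let P := Pr p11 p10 p01 p00 (n := n) in
  (forall b : {ffun 'I_2 * 'I_h -> bool},
      P (fun om => Ba om == b) = ER2h (p11 + p10) b) /\
  (forall b : {ffun 'I_2 * 'I_h -> bool},
      P (fun om => Bb om == b) = ER2h (p11 + p01) b) /\
  (forall b1 b2 : {ffun 'I_2 * 'I_h -> bool},
      P (fun om => [&& Ba om == b1, Bb om == b2 & wa om == wb om])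
      = P (fun om => wa om == wb om) * ER2h_corr p11 p10 p01 p00 b1 b2).
Proof.
move=> _ _ _ _ psum hn u12 ftop W wa wb Ba Bb P.
have hW : (h <= #|W|)%N by rewrite card_compl_pair.
have top_uniq A : uniq (f W A) := (ftop W A hW).1.
have top_in A j : tnth (f W A) j \in W := ((ftop W A hW).2 j).1.
have det_wa : determined_inside W wa.
  by move=> om om' /determined_induced_a; rewrite /wa => ->.
have det_wb : determined_inside W wb.
  by move=> om om' /determined_induced_b; rewrite /wb => ->.
split; [|split].
- move=> b; rewrite /ER2h; have := Pr_top_indep psum u12 (Q := xpredT) (fun x v => v.1 == b x)
    (fun _ => top_uniq _) (fun _ => top_in _) det_wa (fun _ _ _ => erefl).
  rewrite Pr_predT // mul1r (eq_bigr _ (fun x _ => sum_pcell_fst psum (b x))) => <-.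
  by apply: eq_Pr => om; rewrite /Ba bip_eqE.
- move=> b; rewrite /ER2h; have := Pr_top_indep psum u12 (Q := xpredT) (fun x v => v.2 == b x)
    (fun _ => top_uniq _) (fun _ => top_in _) det_wb (fun _ _ _ => erefl).
  rewrite Pr_predT // mul1r (eq_bigr _ (fun x _ => sum_pcell_snd psum (b x))) => <-.
  by apply: eq_Pr => om; rewrite /Bb bip_eqE.
- move=> b1 b2; have det_eq : determined_inside W (fun om => wa om == wb om).
    by move=> om om' agree; rewrite (det_wa _ _ agree) (det_wb _ _ agree).
  have := Pr_top_indep psum u12 (fun x v => v == (b1 x, b2 x))
    (fun _ => top_uniq _) (fun _ => top_in _) det_wa det_eq.
  rewrite /ER2h_corr (eq_bigr _ (fun x _ => big_pred1_eq _ (b1 x, b2 x) _)) => <-.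
  apply: eq_Pr => om; rewrite /Ba /Bb.
  case: (eqVneq (wa om) (wb om)) => [<-|_]; last by rewrite !andbF.
  by rewrite andbT bip_pair_eqE.
Qed.
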